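(* Let $\lambda$ be a finite or countable signature. A sequence $(\mathbf A_n)_{n\in\mathbb N}$ of finite $\lambda$-structures is FO-convergent if and only if the sequence $(\mu_{\mathbf A_n})_{n\in\mathbb N}$ of measures on $S_\lambda$ is weakly-$\ast$ convergent. Moreover, if $\mu_{\mathbf A_n}$ converges weakly-$\ast$ to $\mu$, then for every $\phi\in\mathrm{FO}(\lambda)$, $$\int_{S_\lambda}\mathbf 1_{K(\phi)}\,\mathrm d\mu=\lim_{n\to\infty}\langle\phi,\mathbf A_n\rangle.$$
   Context: $\mathrm{FO}(\lambda)$ denotes first-order formulas in signature $\lambda$ with free variables from $x_1,x_2,\dots$. For $\phi$ with free variables among $x_1,\dots,x_p$ and a finite $\lambda$-structure $\mathbf A$ with domain $A$, $\langle\phi,\mathbf A\rangle=|\{(v_1,\dots,v_p)\in A^p:\mathbf A\models\phi(v_1,\dots,v_p)\}|/|A|^p$; $(\mathbf A_n)$ is FO-convergent if $\langle\phi,\mathbf A_n\rangle$ converges for every $\phi\in\mathrm{FO}(\lambda)$. $S_\lambda$ is the Stone space (space of ultrafilters) of the Boolean algebra of formulas of $\mathrm{FO}(\lambda)$ modulo logical equivalence; for $\phi\in\mathrm{FO}(\lambda)$, $K(\phi)$ is the clopen set of ultrafilters containing the class of $\phi$. For a finite $\lambda$-structure $\mathbf A$, $\mu_{\mathbf A}$ is the regular Borel probability measure on $S_\lambda$ with $\mu_{\mathbf A}(K(\phi))=\langle\phi,\mathbf A\rangle$ for all $\phi$. Weak-$\ast$ convergence of measures $\mu_n$ means convergence of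 $\int f\,\mathrm d\mu_n$ for every continuous $f:S_\lambda\to\mathbb R$. *)

From HB Require Import structures.
From mathcomp Require Import all_boot all_order all_algebra.
From mathcomp Require Import all_classical all_reals ereal.
From mathcomp Require Import topology normedtype sequences numfun measure lebesgue_integral probability.
Set Implicit Arguments. Unset Strict Implicit. Unset Printing Implicit Defensive.
Import Order.TTheory GRing.Theory Num.Theory numFieldNormedType.Exports.
Local Open Scope classical_set_scope.
Local Open Scope ring_scope.

Section FO.
Variables (S : countType) (ar : S -> nat).

(* First-order formulas with equality; variables are x_0, x_1, ... (nat).
   Other connectives/quantifiers are definable from these. *)
Inductive FOform : Type :=
  | FFalse
  | FRel (s : S) of (ar s).-tuple nat
  | FEq of nat & nat
  | FNeg of FOform
  | FAnd of FOform & FOform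
  | FEx of nat & FOform.

Definition FTrue := FNeg FFalse.

Fixpoint fv (f : FOform) : seq nat :=
  match f with
  | FFalse => [::]
  | FRel _ t => val t
  | FEq i j => [:: i; j]
  | FNeg g => fv g
  | FAnd g h => fv g ++ fv h
  | FEx i g => seq.filter (fun k => k != i) (fv g)
  end.

Definition fvb (f : FOform) : nat := foldr maxn 0%N (map succn (fv f)).

Record structure := Structure {
  carrier :> Type;
  cpoint : carrier;
  crel : forall s, (ar s).-tuple carrier -> Prop }.

Fixpoint sat (M : structure) (e : nat -> M) (f : FOform) : Prop :=
  match f with
  | FFalse => False
  | FRel s t => @crel M s (map_tuple e t)
  | FEq i j => e i = e j
  | FNeg g => ~ sat e g
  | FAnd g h => sat e g /\ sat e h
  | FEx i g => exists a : M, sat (fun k => if k == i then a else e k) g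
  end.

Definition entails (f g : FOform) : Prop :=
  forall (M : structure) (e : nat -> M), sat e f -> sat e g.

(* Ultrafilters of the Lindenbaum-Tarski algebra FO(lambda)/equivalence,
   represented by the set of formulas whose class belongs to the
   ultrafilter (such a set is closed under logical equivalence by uf_up). *)
Record ultrafilter := Ultrafilter {
  uf : FOform -> Prop;
  uf_true : uf FTrue;
  uf_false : ~ uf FFalse;
  uf_up : forall f g, uf f -> entails f g -> uf g;
  uf_and : forall f g, uf f -> uf g -> uf (FAnd f g);
  uf_max : forall f, uf f \/ uf (FNeg f) }.

(* the one-point structure, used to exhibit a point of the Stone space *)
Definition pt_structure : structure :=
  @Structure unit tt (fun _ _ => False).

Definition uf0_pred (f : FOform) : Prop := sat (M := pt_structure) (fun _ => tt) f.

Lemma uf0_true : uf0_pred FTrue. Proof. by move=> []. Qed.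
Lemma uf0_false : ~ uf0_pred FFalse. Proof. by []. Qed.
Lemma uf0_up f g : uf0_pred f -> entails f g -> uf0_pred g.
Proof. by move=> Hf H; apply: H. Qed.
Lemma uf0_and f g : uf0_pred f -> uf0_pred g -> uf0_pred (FAnd f g).
Proof. by move=> Hf Hg; split. Qed.
Lemma uf0_max f : uf0_pred f \/ uf0_pred (FNeg f).
Proof. by case: (pselect (uf0_pred f)) => H; [left|right]. Qed.

Definition uf0 : ultrafilter :=
  Ultrafilter uf0_true uf0_false uf0_up uf0_and uf0_max.

HB.instance Definition _ := gen_eqMixin FOform.
HB.instance Definition _ := gen_choiceMixin FOform.
HB.instance Definition _ := isPointed.Build FOform FFalse.

HB.instance Definition _ := gen_eqMixin ultrafilter.
HB.instance Definition _ := gen_choiceMixin ultrafilter.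
HB.instance Definition _ := isPointed.Build ultrafilter uf0.

Definition Kset (f : FOform) : set ultrafilter := [set U | uf U f].

HB.instance Definition _ :=
  isSubBaseTopological.Build ultrafilter (@setT FOform) Kset.

Definition Stone := g_sigma_algebraType (@open ultrafilter).

Definition K (f : FOform) : set Stone := Kset f.

Record finstructure := FinStructure {
  fdom : finType;
  fpoint : fdom;
  frel : forall s, (ar s).-tuple fdom -> bool }.

Definition fin_to_structure (A : finstructure) : structure :=
  @Structure (fdom A) (fpoint A) (fun s t => frel t).
Coercion fin_to_structure : finstructure >-> structure.

Definition env (A : finstructure) (p : nat) (v : p.-tuple (fdom A)) :
  nat -> fdom A := fun k => nth (fpoint A) v k.

(* Stone pairing <phi, A> : probability that a uniformly random assignment
   of x_0..x_(p-1) in A satisfies phi, p = fvb phi *)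
Definition pairing (R : realType) (f : FOform) (A : finstructure) : R :=
  (#|[set v : (fvb f).-tuple (fdom A) | `[< @sat A (env v) f >] ]|%:R
   / (#|fdom A| ^ fvb f)%:R)%R.

Definition FO_convergent (R : realType) (A : nat -> finstructure) : Prop :=
  forall f : FOform, cvg ((fun n => pairing R f (A n)) @ \oo).

Definition regular_measure (R : realType) (mu : {measure set Stone -> \bar R}) :=
  forall B : set Stone, measurable B ->
    mu B = ereal_sup [set mu C | C in
                      [set C : set ultrafilter | compact C /\ C `<=` B]] /\
    mu B = ereal_inf [set mu O | O in
                      [set O : set ultrafilter | open O /\ B `<=` O]].

Definition weak_star_convergent (R : realType) (mu : nat -> probability Stone R) :=
  forall h : ultrafilter -> R, continuous h ->
    cvg ((fun n => Rintegral (mu n) setT h) @ \oo).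

Definition weak_star_converges_to (R : realType)
    (mu : nat -> probability Stone R) (nu : probability Stone R) :=
  forall h : ultrafilter -> R, continuous h ->
    (fun n => Rintegral (mu n) setT h) @ \oo --> Rintegral nu setT h.

End FO.

(* Weak-* convergence gives FO-convergence by testing it on the indicators of
   the clopen sets K(phi), whose integrals are the Stone pairings.  Conversely,
   S_lambda is compact and the K(phi) form a basis closed under the Boolean
   connectives, so every continuous h is a uniform limit of finite linear
   combinations of such indicators; their integrals against mu_n are linear
   combinations of pairings, hence converge, and a 3-epsilon argument shows that
   the integrals of h form a Cauchy sequence. *)
From HB Require Import structures.
From mathcomp Require Import all_boot all_order all_algebra.
From mathcomp Require Import all_classical all_reals ereal.
From mathcomp Require Import topology normedtype sequences numfun measure lebesgue_integral probability.
From mathcomp Require Import lebesgue_measure measurable_realfun.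
From mathcomp Require Import lra.
Import Order.TTheory GRing.Theory Num.Theory numFieldNormedType.Exports.
Local Open Scope classical_set_scope.
Local Open Scope ring_scope.

Section StoneSpace.
Variables (S : countType) (ar : S -> nat).
Local Notation formula := (FOform ar).
Local Notation U := (ultrafilter ar).
Implicit Types (f g : formula) (u : U).

Lemma uf_FAnd u f g : uf u (FAnd f g) <-> uf u f /\ uf u g.
Proof.
split; last by case=> ? ?; apply: uf_and.
by move=> ufg; split; apply: (uf_up ufg) => M e [].
Qed.

Lemma uf_FNeg u f : uf u (FNeg f) <-> ~ uf u f.
Proof.
split; last by case: (uf_max u f).
move=> ufN uff; apply: (@uf_false _ _ u); apply: (uf_up (uf_and uff ufN)).
by move=> M e /= [].
Qed.

Definition big_FAnd (l : seq formula) : formula := foldr (@FAnd _ ar) (FTrue ar) l.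

Lemma uf_big_FAnd u l : uf u (big_FAnd l) <-> forall f, f \in l -> uf u f.
Proof.
elim: l => [|g l IHl] /=; first by split=> // _; apply: uf_true.
rewrite uf_FAnd IHl; split.
  by case=> ufg ufl f; rewrite inE => /orP[/eqP->|/ufl].
move=> ufl; split; first by apply: ufl; rewrite mem_head.
by move=> f fl; apply: ufl; rewrite inE fl orbT.
Qed.

Lemma Kset_FAnd f g : Kset (FAnd f g) = Kset f `&` Kset g.
Proof. by apply/seteqP; split=> u; rewrite /Kset /= uf_FAnd. Qed.

Lemma Kset_FNeg f : Kset (FNeg f) = ~` Kset f.
Proof. by apply/seteqP; split=> u; rewrite /Kset /= uf_FNeg. Qed.

Lemma Kset_FTrue : Kset (FTrue ar) = setT.
Proof. by apply/seteqP; split=> u //= _; apply: uf_true. Qed.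

Lemma Kset_FFalse : Kset (FFalse ar) = set0.
Proof. by apply/seteqP; split=> u //=; apply: uf_false. Qed.

Lemma open_Kset f : open (Kset f).
Proof.
exists [set Kset f]; last by rewrite bigcup_set1.
by move=> _ ->; apply: finI_from1.
Qed.

Lemma nbhs_Kset u (A : set U) : nbhs u A -> exists f, uf u f /\ Kset f `<=` A.
Proof.
move=> [B [[D sD <-] Bu BA]].
have [i Di ufi] := Bu.
have [E _ eE] := sD _ Di; rewrite -eE in ufi.
exists (big_FAnd (finmap.enum_fset E)); split.
  by apply/uf_big_FAnd => f fE; apply: ufi.
move=> v /uf_big_FAnd ufE; apply: BA; exists i => //.
by rewrite -eE /= => g gE; apply: ufE.
Qed.

Lemma continuous_indic_Kset (R : realType) f : continuous (\1_(Kset f) : U -> R).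
Proof.
apply/continuousP => A _; rewrite preimage_indic.
case: ifP => _; case: ifP => _; [exact: openT|exact: open_Kset| |exact: open0].
by rewrite -Kset_FNeg; apply: open_Kset.
Qed.

(* An ultrafilter of sets of ultrafilters induces, via f |-> K f, an
   ultrafilter of formulas, which is the limit point it converges to. *)
Lemma compact_Stone : compact [set: U].
Proof.
rewrite compact_ultra => G G_ultra _.
pose P f := G (Kset f).
have P_up f g : P f -> entails f g -> P g.
  by move=> Pf fg; apply: filterS Pf => u ufu; apply: uf_up ufu fg.
have P_true : P (FTrue ar) by rewrite /P Kset_FTrue; apply: filterT.
have P_false : ~ P (FFalse ar) by rewrite /P Kset_FFalse; apply: filter_not_empty.
have P_and f g : P f -> P g -> P (FAnd f g) by rewrite /P Kset_FAnd; apply: filterI.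
have P_max f : P f \/ P (FNeg f) by rewrite /P Kset_FNeg; apply: in_ultra_setVsetC.
exists (Ultrafilter P_true P_false P_up P_and P_max); split => //.
by move=> A /nbhs_Kset [f [Pf fA]]; apply: filterS fA Pf.
Qed.

Section StepFunctions.
Variable R : realType.
Implicit Types (h : U -> R) (L : seq (formula * R)).

Definition step L : U -> R := fun u => \sum_(p <- L) p.2 * \1_(Kset p.1) u.

Lemma step_nil : step [::] = cst 0.
Proof. by apply/funext => u; rewrite /step big_nil. Qed.

Lemma step_consE p L u : step (p :: L) u = p.2 * \1_(Kset p.1) u + step L u.
Proof. by rewrite /step big_cons. Qed.

Lemma step_cons p L : step (p :: L) = (cst p.2 \* \1_(Kset p.1)) + step L.
Proof. by apply/funext => u; rewrite step_consE. Qed.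

Lemma continuous_step L : continuous (step L).
Proof.
elim: L => [|p L IHL]; first by rewrite step_nil; apply: cst_continuous.
rewrite step_cons => u; apply: continuousD; last exact: IHL.
by apply: continuousM; [apply: cst_continuous | apply: continuous_indic_Kset].
Qed.

Lemma indic_Kset_in f u : uf u f -> \1_(Kset f) u = 1 :> R.
Proof. by move=> ufu; rewrite indicE mem_set. Qed.

Lemma indic_Kset_notin f u : ~ uf u f -> \1_(Kset f) u = 0 :> R.
Proof. by move=> nufu; rewrite indicE memNset. Qed.

Definition step_avoid f L := [seq (FAnd (FNeg f) p.1, p.2) | p <- L].

Lemma step_avoid_in f L u : uf u f -> step (step_avoid f L) u = 0.
Proof.
move=> ufu; rewrite /step big_map big1 // => p _ /=.
by rewrite indic_Kset_notin ?mulr0 // uf_FAnd uf_FNeg; case.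
Qed.

Lemma step_avoid_notin f L u : ~ uf u f -> step (step_avoid f L) u = step L u.
Proof.
move=> nufu; rewrite /step big_map; apply: eq_bigr => p _ /=.
case: (pselect (uf u p.1)) => ufp.
  by rewrite !indic_Kset_in // uf_FAnd uf_FNeg.
by rewrite !indic_Kset_notin // uf_FAnd; case.
Qed.

(* Disjointification: [step (first_match l)] takes at [u] the value attached to
   the first formula of [l] in [u]. *)
Fixpoint first_match (l : seq (formula * R)) : seq (formula * R) :=
  if l is p :: l' then p :: step_avoid p.1 (first_match l') else [::].

Lemma first_match_approx h (d : R) l u :
  (forall p, p \in l -> uf u p.1 -> `|h u - p.2| < d) ->
  (exists2 p, p \in l & uf u p.1) -> `|h u - step (first_match l) u| < d.
Proof.
elim: l => [|p l IHl] close_l; first by case.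
rewrite /= step_consE /=.
case: (pselect (uf u p.1)) => ufp.
  rewrite indic_Kset_in // step_avoid_in // mulr1 addr0 => _.
  by apply: close_l; rewrite ?mem_head.
rewrite indic_Kset_notin // step_avoid_notin // mulr0 add0r.
move=> [q]; rewrite inE => /orP[/eqP->|ql] ufq //.
apply: IHl; last by exists q.
by move=> r rl; apply: close_l; rewrite inE rl orbT.
Qed.

Lemma step_approx {h} (d : R) : continuous h -> 0 < d ->
  exists L, forall u, `|h u - step L u| < d.
Proof.
move=> hc d_gt0.
have local u : exists f, uf u f /\ forall v, uf v f -> `|h v - h u| < d.
  have [f [ufu fsub]] := nbhs_Kset _ _ ((cvgrPdist_lt _ _).1 (hc u) d d_gt0).
  by exists f; split => // v /fsub /=; rewrite distrC.
have [g gP] := choice local.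
have Stone_cover := compact_Stone; rewrite compact_cover in Stone_cover.
have [D _ Dcover] := Stone_cover U setT (fun u => Kset (g u))
  (fun u _ => open_Kset (g u)) (fun u _ => ex_intro2 _ _ u I (gP u).1).
pose l := [seq (g v, h v) | v <- finmap.enum_fset D].
exists (first_match l) => u; apply: first_match_approx.
  by move=> _ /mapP[v _ ->] /= ufv; apply: (gP v).2.
have [v Dv ufv] := Dcover u I.
by exists (g v, h v) => //; apply/mapP; exists v.
Qed.

End StepFunctions.

Arguments step {R}.

Section Integration.
Variables (R : realType) (mu : probability (Stone ar) R).
Implicit Types h : U -> R.

Lemma measurable_K f : measurable (K f).
Proof. by apply: sub_sigma_algebra; apply: open_Kset. Qed.

Lemma measurable_fun_continuous {h} : continuous h ->
  measurable_fun [set: Stone ar] (fun x : Stone ar => h x).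
Proof.
move=> /continuousP hc.
apply: (measurability _ (RGenOpens.measurableE R)).
move=> _ [_ [a [b ->] <-]]; apply: measurableI => //.
by apply: sub_sigma_algebra; apply: hc; apply: interval_open.
Qed.

Lemma continuous_bounded {h} : continuous h -> exists M, forall u, `|h u| <= M.
Proof.
move=> hc.
have [M [_ hM]] := compact_bounded
  (continuous_compact (continuous_subspaceT hc) compact_Stone).
exists (`|M| + 1) => u; apply: (hM (`|M| + 1)); last by exists u.
by rewrite ltr_pwDr // ler_norm.
Qed.

Lemma integrable_continuous {h} : continuous h ->
  mu.-integrable setT (EFin \o (h : Stone ar -> R)).
Proof.
move=> hc; have [M hM] := continuous_bounded hc.
apply: (@le_integrable _ _ _ mu setT measurableT _ (EFin \o cst M)).
- by apply: measurableT_comp => //; apply: measurable_fun_continuous.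
- by move=> u _ /=; rewrite lee_fin; apply: le_trans (hM u) (ler_norm _).
- exact: finite_measure_integrable_cst.
Qed.

Lemma Rintegral_indic_K f : Rintegral mu setT (\1_(K f)) = fine (mu (K f)).
Proof. by rewrite /Rintegral integral_indic ?setIT //; apply: measurable_K. Qed.

Lemma Rintegral_step (L : seq (formula * R)) :
  Rintegral mu setT (step L) = \sum_(p <- L) p.2 * fine (mu (K p.1)).
Proof.
elim: L => [|p L IHL]; first by rewrite step_nil Rintegral_cst // mul0r big_nil.
have indic_int := integrable_continuous (continuous_indic_Kset R p.1).
have weighted_int : mu.-integrable setT (EFin \o (cst p.2 \* \1_(K p.1))).
  apply: integrable_continuous => u; apply: continuousM; first exact: cst_continuous.
  exact: continuous_indic_Kset.
rewrite step_cons big_cons -IHL (RintegralD measurableT weighted_int); last first.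
  exact: integrable_continuous (continuous_step R L).
by rewrite RintegralZl // Rintegral_indic_K.
Qed.

Lemma Rintegral_dist_le {h s} (d : R) : continuous h -> continuous s ->
  (forall u, `|h u - s u| <= d) ->
  `|Rintegral mu setT h - Rintegral mu setT s| <= d.
Proof.
move=> hc sc hs_le.
have hsc : continuous (h \- s) by move=> u; apply: cvgB (hc u) (sc u).
have abs_hsc : continuous (fun u => `|(h \- s) u|) by move=> u; apply: cvg_norm (hsc u).
rewrite -RintegralB //; [|exact: integrable_continuous|exact: integrable_continuous].
apply: le_trans (le_normr_Rintegral measurableT (integrable_continuous hsc)) _.
have dc : continuous (cst d : U -> R) by apply: cst_continuous.
have := le_Rintegral measurableT (integrable_continuous abs_hsc)
  (integrable_continuous dc) (fun u _ => hs_le u).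
have mu_setT : fine (mu [set: Stone ar]) = 1 by rewrite probability_setT.
by rewrite Rintegral_cst // mu_setT mulr1.
Qed.

End Integration.

Lemma is_cvg_weighted_sum (R : realType) (T : Type) (L : seq (T * R))
    (a : T -> nat -> R) :
  (forall t, cvg (a t @ \oo)) -> cvg ((fun n => \sum_(p <- L) p.2 * a p.1 n) @ \oo).
Proof.
move=> a_cvg; elim: L => [|p L IHL].
  by under eq_fun do rewrite big_nil; apply: is_cvg_cst.
under eq_fun do rewrite big_cons.
by apply: is_cvgD => //; apply: is_cvgM => //; apply: is_cvg_cst.
Qed.

Lemma weak_star_convergent_of_cvg_K (R : realType) (mu : nat -> probability (Stone ar) R) :
  (forall f, cvg ((fun n => fine (mu n (K f))) @ \oo)) -> weak_star_convergent mu.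
Proof.
move=> muK_cvg h hc; apply/cauchy_cvgP; apply: cauchy_exP => e e_gt0.
have e3_gt0 : 0 < e / 3 by rewrite divr_gt0.
have [L hL] := step_approx R (e / 3) hc e3_gt0.
pose J n := \sum_(p <- L) p.2 * fine (mu n (K p.1)).
have /cvgrPdist_lt /(_ _ e3_gt0) J_near := is_cvg_weighted_sum R _ L _ muK_cvg.
exists (lim (J @ \oo)).
change (\forall n \near \oo, ball (lim (J @ \oo)) e (Rintegral (mu n) setT h)).
near=> n; rewrite -ball_normE /=.
have int_close := Rintegral_dist_le R (mu n) (e / 3) hc (continuous_step R L)
  (fun u => ltW (hL u)).
rewrite Rintegral_step distrC in int_close.
have J_close : `|lim (J @ \oo) - J n| < e / 3 by near: n.
apply: le_lt_trans (ler_distD (J n) _ _) _.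
apply: lt_le_trans (ltr_leD J_close int_close) _.
lra.
Unshelve. all: by end_near.
Qed.

End StoneSpace.

Theorem theorem2p16 (S : countType) (ar : S -> nat) (R : realType)
    (A : nat -> finstructure ar) (mu : nat -> probability (Stone ar) R)
    (Hmu : forall n (f : FOform ar), mu n (K f) = (pairing R f (A n))%:E)
    (Hreg : forall n, regular_measure (mu n)) :
  (FO_convergent R A <-> weak_star_convergent mu) /\
  (forall nu : probability (Stone ar) R, weak_star_converges_to mu nu ->
     forall f : FOform ar,
       (fun n => pairing R f (A n)) @ \oo -->
         Rintegral nu setT (\1_(K f) : Stone ar -> R)).
Proof.
have mu_K f : (fun n => fine (mu n (K f))) = (fun n => pairing R f (A n)).
  by apply/funext => n; rewrite Hmu.
have integral_K f : (fun n => Rintegral (mu n) setT (\1_(K f) : Stone ar -> R))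
    = (fun n => pairing R f (A n)).
  by rewrite -mu_K; apply/funext => n; rewrite Rintegral_indic_K.
split; last first.
  by move=> nu mu_nu f; rewrite -integral_K; apply: mu_nu; apply: continuous_indic_Kset.
split=> [FO_cvg | weak_cvg f]; last first.
  by rewrite -integral_K; apply: weak_cvg; apply: continuous_indic_Kset.
by apply: weak_star_convergent_of_cvg_K => f; rewrite mu_K; apply: FO_cvg.
Qed.
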